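(* Fix $\omega>0$ and $\alpha_0,\alpha_1\in\mathbb C$, and let $\alpha(t)=(1-t)\alpha_0+t\alpha_1$ for $t\in[0,1]$. Assume $\omega^2>|\alpha(t)|^2$ for all $t\in[0,1]$. Let $$\xi_-(t)=\frac{\omega-\sqrt{\omega^2-|\alpha(t)|^2}}{\alpha(t)}$$ (understood as $\frac{\overline{\alpha(t)}}{\omega+\sqrt{\omega^2-|\alpha(t)|^2}}$, which is also defined when $\alpha(t)=0$). Then the curve $t\mapsto\xi_-(t)$, $t\in[0,1]$, traces a segment of a hyperbolic line in the Poincaré disk $D=\{|z|<1\}$.
   Context: A hyperbolic line in the Poincaré disk model $D$ is the intersection of $D$ with a Euclidean circle orthogonal to the unit circle, or with a straight line through the origin (a diameter). The point $\xi_-(t)$ lies in $D$ and is the parameter of the ground state of $H(t)=\omega a^*a+\frac{\alpha(t)}{2}a^2+\frac{\overline{\alpha(t)}}{2}{a^*}^2$, i.e. the ground state is annihilated by $a+\xi_-(t)a^*$. *)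

From Stdlib Require Import Reals.
From Coquelicot Require Import Coquelicot.
Open Scope R_scope.

Definition in_disk (z : C) : Prop := Cmod z < 1.

(* A hyperbolic line in D: the intersection of D with a Euclidean circle
   orthogonal to the unit circle (center c, radius r > 0, |c|^2 = 1 + r^2),
   or with a straight line through the origin (spanned by u <> 0). *)
Definition hyperbolic_line (L : C -> Prop) : Prop :=
  (exists (c : C) (r : R), 0 < r /\ Cmod c ^ 2 = 1 + r ^ 2 /\
      forall z, L z <-> (in_disk z /\ Cmod (Cminus z c) = r))
  \/
  (exists u : C, u <> 0%C /\
      forall z, L z <-> (in_disk z /\ Im (Cmult z (Cconj u)) = 0)).

Definition alpha (a0 a1 : C) (t : R) : C :=
  Cplus (Cmult (RtoC (1 - t)) a0) (Cmult (RtoC t) a1).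

Definition xi_minus (omega : R) (a0 a1 : C) (t : R) : C :=
  Cdiv (Cconj (alpha a0 a1 t))
       (RtoC (omega + sqrt (omega ^ 2 - Cmod (alpha a0 a1 t) ^ 2))).

(** The map [ξ ↦ 2ω conj ξ / (1 + |ξ|²)] inverts [α ↦ ξ_-(α)] on [|α| < ω],
    because [1 + |ξ_-(α)|² = 2ω / (ω + sqrt (ω² - |α|²))].  The points [α(t)]
    lie on a Euclidean line [Re (α conj n) = e], so the [ξ_-(t)] satisfy
    [e (1 + |ξ|²) = 2ω Re (ξ n)].  For [e = 0] this is a diameter of the disk;
    for [e <> 0] it is the circle [|ξ - c|² = |c|² - 1] with [c = ω conj n / e],
    which is orthogonal to the unit circle, and its radius is positive because
    it passes through the point [ξ_-(0)] of the open disk. *)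

From Stdlib Require Import Reals Lra.
From Coquelicot Require Import Coquelicot.
Open Scope R_scope.
Set Bullet Behavior "Strict Subproofs".

Lemma continuous_C_pair (f g : R -> R) (t : R) :
  continuous f t -> continuous g t -> continuous (fun u => (f u, g u) : C) t.
Proof.
  intros Hf Hg. apply (continuous_comp_2 f g pair); auto.
  apply continuous_ext with (fun z => z); [intros []; reflexivity|].
  apply continuous_id.
Qed.

Lemma Cmod_sub_pow2 (z c : C) :
  Cmod (z - c) ^ 2 = Cmod z ^ 2 - 2 * Re (z * Cconj c) + Cmod c ^ 2.
Proof.
  rewrite !Cmod2_alt. destruct z as [x y], c as [u v].
  unfold Re, Im; simpl. ring.
Qed.

Definition orthogonal_circle (e : R) (w z : C) : Prop :=
  in_disk z /\ e * (1 + Cmod z ^ 2) = 2 * Re (z * w).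

Lemma orthogonal_circle_eq_iff (e : R) (w z : C) : e <> 0 ->
  let c := (Re w / e, - Im w / e) : C in
  e * (1 + Cmod z ^ 2) = 2 * Re (z * w) <-> Cmod (z - c) ^ 2 = Cmod c ^ 2 - 1.
Proof.
  intros He c.
  assert (Hc : e * (Cmod (z - c) ^ 2 - (Cmod c ^ 2 - 1)) =
               e * (1 + Cmod z ^ 2) - 2 * Re (z * w)).
  { rewrite Cmod_sub_pow2.
    destruct z as [x y], w as [u v]. unfold c, Re, Im; simpl. field. exact He. }
  split; intro H.
  - rewrite H, Rminus_diag in Hc.
    destruct (Rmult_integral _ _ Hc); [contradiction | lra].
  - rewrite H, Rminus_diag, Rmult_0_r in Hc. lra.
Qed.

Lemma hyperbolic_line_orthogonal_circle (e : R) (w z0 : C) :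
  w <> 0%C -> orthogonal_circle e w z0 -> hyperbolic_line (orthogonal_circle e w).
Proof.
  intros Hw [Hz0 Hz0e]. unfold orthogonal_circle.
  destruct (Req_dec e 0) as [He|He].
  - right. exists (Ci * Cconj w)%C.
    split.
    { apply (Cmult_neq_0 _ _ Ci_nz), Cmod_gt_0. rewrite Cmod_conj. apply Cmod_gt_0, Hw. }
    intro z. rewrite He. destruct z as [x y], w as [u v]. unfold Re, Im; simpl.
    rewrite !Rmult_0_l. split; intros [Hd Hz]; split; auto; nra.
  - set (c := (Re w / e, - Im w / e) : C).
    assert (Hr2 := proj1 (orthogonal_circle_eq_iff e w z0 He) Hz0e). fold c in Hr2.
    assert (Hr : 0 < Cmod c ^ 2 - 1).
    { destruct (Rle_lt_or_eq_dec 0 (Cmod (z0 - c)) (Cmod_ge_0 _)) as [Hlt|Heq].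
      - rewrite <- Hr2. apply pow_lt, Hlt.
      - exfalso.
        assert (Ez0 : z0 = c) by (apply Ceq_minus, Cmod_eq_0; auto).
        rewrite <- Heq in Hr2. rewrite Ez0 in Hz0. unfold in_disk in Hz0.
        assert (0 <= Cmod c) by apply Cmod_ge_0.
        nra. }
    left. exists c, (sqrt (Cmod c ^ 2 - 1)).
    split; [apply sqrt_lt_R0, Hr|]. split; [rewrite pow2_sqrt; lra|].
    intro z. rewrite (orthogonal_circle_eq_iff e w z He). fold c.
    split; intros [Hd Hz]; split; auto.
    + rewrite <- Hz. apply eq_sym, sqrt_pow2, Cmod_ge_0.
    + rewrite Hz. apply pow2_sqrt. lra.
Qed.

Definition ground_denom (omega : R) (a : C) : R :=
  omega + sqrt (omega ^ 2 - Cmod a ^ 2).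

Definition ground_param (omega : R) (a : C) : C :=
  Cdiv (Cconj a) (RtoC (ground_denom omega a)).

Lemma xi_minus_ground_param (omega : R) (a0 a1 : C) (t : R) :
  xi_minus omega a0 a1 t = ground_param omega (alpha a0 a1 t).
Proof. reflexivity. Qed.

Lemma ground_denom_pos (omega : R) (a : C) : 0 < omega -> 0 < ground_denom omega a.
Proof.
  intro Ho. unfold ground_denom.
  assert (0 <= sqrt (omega ^ 2 - Cmod a ^ 2)) by apply sqrt_pos.
  lra.
Qed.

Lemma ground_param_components (omega : R) (a : C) : 0 < omega ->
  ground_param omega a =
  (Re a / ground_denom omega a, - Im a / ground_denom omega a).
Proof.
  intro Ho. assert (HD := ground_denom_pos omega a Ho).
  unfold ground_param, Cdiv, Cconj, Cinv, Cmult, Re, Im; simpl.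
  set (D := ground_denom omega a) in *.
  apply injective_projections; simpl; field; nra.
Qed.

Section GroundParam.

Variables (omega : R) (a : C).
Hypotheses (omega_gt0 : 0 < omega) (a_lt_omega : Cmod a ^ 2 < omega ^ 2).

Lemma ground_denom_gt : omega < ground_denom omega a.
Proof.
  unfold ground_denom.
  assert (0 < sqrt (omega ^ 2 - Cmod a ^ 2)) by (apply sqrt_lt_R0; lra).
  lra.
Qed.

Lemma Cmod_pow2_ground_denom :
  Cmod a ^ 2 = ground_denom omega a * (2 * omega - ground_denom omega a).
Proof.
  unfold ground_denom.
  assert (HS := sqrt_sqrt (omega ^ 2 - Cmod a ^ 2) ltac:(lra)).
  nra.
Qed.

Lemma one_add_Cmod_ground_param :
  1 + Cmod (ground_param omega a) ^ 2 = 2 * omega / ground_denom omega a.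
Proof.
  assert (HD := ground_denom_gt).
  rewrite Cmod2_alt, ground_param_components by exact omega_gt0; simpl.
  assert (Ha := Cmod_pow2_ground_denom). rewrite Cmod2_alt in Ha.
  set (D := ground_denom omega a) in *.
  transitivity ((D ^ 2 + (Re a ^ 2 + Im a ^ 2)) / D ^ 2); [field; lra|].
  rewrite Ha. field. lra.
Qed.

Lemma in_disk_ground_param : in_disk (ground_param omega a).
Proof.
  assert (HD := ground_denom_gt).
  assert (Hz := one_add_Cmod_ground_param).
  assert (Hlt : 2 * omega / ground_denom omega a < 2).
  { apply Rmult_lt_reg_r with (ground_denom omega a); [lra|].
    field_simplify; lra. }
  unfold in_disk. assert (0 <= Cmod (ground_param omega a)) by apply Cmod_ge_0.
  nra.
Qed.

Lemma ground_param_orthogonal_circle (n : C) :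
  orthogonal_circle (Re (a * Cconj n)) (omega * n) (ground_param omega a).
Proof.
  split; [exact in_disk_ground_param|].
  rewrite one_add_Cmod_ground_param, ground_param_components by exact omega_gt0.
  assert (HD := ground_denom_gt).
  destruct a as [x y], n as [u v]. unfold Re, Im; simpl. field. lra.
Qed.

End GroundParam.

Lemma Re_alpha_mul_Cconj (a0 a1 n : C) (t : R) :
  Re (alpha a0 a1 t * Cconj n) = Re (a0 * Cconj n) + t * Re ((a1 - a0) * Cconj n).
Proof. destruct a0, a1, n. unfold alpha, Re; simpl. ring. Qed.

Lemma alpha_on_line (a0 a1 : C) : exists n : C, n <> 0%C /\
  forall t, Re (alpha a0 a1 t * Cconj n) = Re (a0 * Cconj n).
Proof.
  destruct (Rle_lt_or_eq_dec 0 (Cmod (a1 - a0)) (Cmod_ge_0 _)) as [Hd|Hd].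
  - exists (Ci * (a1 - a0))%C. split.
    { apply (Cmult_neq_0 _ _ Ci_nz), Cmod_gt_0, Hd. }
    intro t. rewrite Re_alpha_mul_Cconj.
    destruct a0, a1. unfold Re; simpl. ring.
  - exists 1%C. split; [exact C1_nz|].
    intro t. rewrite Re_alpha_mul_Cconj, (Cmod_eq_0 _ (eq_sym Hd)).
    unfold Re; simpl. ring.
Qed.

Lemma continuous_ground_param_path (omega : R) (p q : R -> R) (t : R) :
  0 < omega -> p t ^ 2 + q t ^ 2 < omega ^ 2 -> ex_derive p t -> ex_derive q t ->
  continuous (fun s => ground_param omega (p s, q s)) t.
Proof.
  intros Ho Ht Hp Hq.
  apply continuous_ext with
    (fun s => let D := omega + sqrt (omega ^ 2 - (p s ^ 2 + q s ^ 2)) in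
              (p s / D, - q s / D)).
  { intro s. rewrite ground_param_components by exact Ho.
    unfold ground_denom. rewrite Cmod2_alt. reflexivity. }
  simpl in Ht.
  apply continuous_C_pair;
    apply (ex_derive_continuous (K := R_AbsRing) (V := R_NormedModule)); auto_derive.
  all: repeat split; auto; [lra|].
  all: match goal with |- _ + sqrt ?x <> 0 => generalize (sqrt_pos x) end; lra.
Qed.

Lemma continuous_xi_minus (omega : R) (a0 a1 : C) (t : R) :
  0 < omega -> Cmod (alpha a0 a1 t) ^ 2 < omega ^ 2 ->
  continuous (xi_minus omega a0 a1) t.
Proof.
  intros Ho Ht.
  apply continuous_ext with
    (fun s => ground_param omega (Re (alpha a0 a1 s), Im (alpha a0 a1 s))).
  { intro s. rewrite xi_minus_ground_param. destruct (alpha a0 a1 s). reflexivity. }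
  rewrite Cmod2_alt in Ht.
  apply continuous_ground_param_path; auto.
  all: destruct a0, a1; unfold alpha, Re, Im; simpl; auto_derive; exact I.
Qed.

Theorem theorem3 (omega : R) (a0 a1 : C) :
  0 < omega ->
  (forall t : R, 0 <= t <= 1 -> Cmod (alpha a0 a1 t) ^ 2 < omega ^ 2) ->
  (forall t : R, 0 <= t <= 1 -> continuous (xi_minus omega a0 a1) t) /\
  exists L : C -> Prop, hyperbolic_line L /\
    forall t : R, 0 <= t <= 1 -> L (xi_minus omega a0 a1 t).
Proof.
  intros Ho Hbound. split.
  { intros t Ht. exact (continuous_xi_minus omega a0 a1 t Ho (Hbound t Ht)). }
  destruct (alpha_on_line a0 a1) as [n [Hn Hline]].
  assert (Hcirc : forall t, 0 <= t <= 1 ->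
            orthogonal_circle (Re (a0 * Cconj n)) (omega * n) (xi_minus omega a0 a1 t)).
  { intros t Ht. rewrite <- (Hline t), xi_minus_ground_param.
    exact (ground_param_orthogonal_circle omega _ Ho (Hbound t Ht) n). }
  exists (orthogonal_circle (Re (a0 * Cconj n)) (omega * n)). split; [|exact Hcirc].
  apply hyperbolic_line_orthogonal_circle with (xi_minus omega a0 a1 0).
  - apply Cmult_neq_0; [intro H; injection H; lra | exact Hn].
  - apply Hcirc. lra.
Qed.
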